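(* Let $A = L^{q_k} R^{p_k} \cdots L^{q_1} R^{p_1} \in \rm{SL}(2; \mathbb{Z})$ where $p_1, q_1, \cdots, p_k, q_k$ and $k$ are positive integers. Let $\ell= p_1 + q_1 + \cdots + p_k + q_k$ and $s$ be the slope of the eigenvectors with respect to the expanding eigenvalue $\lambda>1$ of $A$. For the pseudo-Anosov map $f_A: \Sigma_{1,1} \rightarrow \Sigma_{1,1}$ with dilatation $\lambda$, we have the following. \begin{enumerate} \item[(1)] The measured train track $(\tau_0, \mu_0)= (\tau_{[\frac{0}{1}, \frac{1}{0}]}, \left(\begin{smallmatrix} 1 \\ s \end{smallmatrix}\right))$ is suited to the stable measured lamination of $f_A$. \item[(2)] Starting with the measured train track $ (\tau_0, \mu_0)$, the first $\ell+1$ terms $$(\tau_0, \mu_0) \overset{L}{\rightharpoonup}{}^{q_k} \ \overset{R}{\rightharpoonup}{}^{p_k} \ \cdots \ \overset{L}{\rightharpoonup}{}^{q_1} \ \overset{R}{\rightharpoonup}{}^{p_1} (\tau_\ell, \mu_\ell) $$ of the maximal splitting sequence satisfies $(\tau_{\ell}, \mu_{\ell}) = f_A(\tau_0, \lambda^{-1} \mu_0)$. Thus, it forms a length $\ell$ Agol cycle of $f_A$. Moreover, $\tau_\ell=\tau_{[\frac{b}{a}, \frac{d}{c}]}$, where $\left(\begin{smallmatrix}a & c \\ b & d \end{smallmatrix}\right) = A$. \end{enumerate}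
   Context: $L= \left(\begin{smallmatrix}1 & 0 \\ 1 & 1 \end{smallmatrix}\right)$, $R= \left(\begin{smallmatrix}1 & 1 \\0 & 1\end{smallmatrix}\right)$; $f_A:\Sigma_{1,1}\to\Sigma_{1,1}$ is the homeomorphism of the once-punctured torus $\Sigma_{1,1}=(\mathbb{R}^2\setminus\mathbb{Z}^2)/\mathbb{Z}^2$ induced by the linear map $A$. The slope $s$ means $A\left(\begin{smallmatrix} 1 \\ s \end{smallmatrix}\right)=\lambda\left(\begin{smallmatrix} 1 \\ s \end{smallmatrix}\right)$. The base train track $\tau_0=\tau_{[\frac{0}{1}, \frac{1}{0}]}$ in $\Sigma_{1,1}$ is obtained from the simple closed curves of slope $0$ and $\infty$ by flattening the NW and SE right angles at their intersection; it has one large and two small branches, and the measure $\left(\begin{smallmatrix} x \\ y \end{smallmatrix}\right)$ gives weight $x$ to the horizontal small branch, $y$ to the vertical small branch. For nonnegative integers $a,b,c,d$ with $ad-bc=1$, the train track $\tau_{[\frac{b}{a},\frac{d}{c}]}$ is defined inductively from $\tau_0$: the left splitting of $\tau_{[\frac{b}{a},\frac{d}{c}]}$ at its unique large branch is $\tau_{[\frac{b+d}{a+c},\frac{d}{c}]}$ and the right splitting is $\tau_{[\frac{b}{a},\frac{b+d}{a+c}]}$; equivalently $\tau_{[\frac{b}{a},\frac{d}{c}]}=f_{\left(\begin{smallmatrix}a & c \\ b & d \end{smallmatrix}\right)}(\tau_0)$. A maximal splitting $\rightharpoonup$ splits simultaneously along all large branches of maximal weight; $\overset{L}{\rightharpoonup}$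 (resp. $\overset{R}{\rightharpoonup}$) denotes a maximal splitting consisting of left (resp. right) splittings, and an exponent means that many consecutive ones. An Agol cycle of a pseudo-Anosov $\phi$ with dilatation $\lambda$ is a segment $(\tau_n,\mu_n)\rightharpoonup^m(\tau_{n+m},\mu_{n+m})=\phi(\tau_n,\lambda^{-1}\mu_n)$ of the maximal splitting sequence from a measured train track suited to the stable measured lamination. *)

From HB Require Import structures.
From mathcomp Require Import all_boot all_order all_algebra.
Set Implicit Arguments. Unset Strict Implicit. Unset Printing Implicit Defensive.
Import Order.TTheory GRing.Theory Num.Theory.
Local Open Scope ring_scope.

(* A 2x2 integer matrix from entries: mat2 a b c d = (a c ; b d),
   so that tau_[b/a, d/c] is indexed by mat2 a b c d. *)
Definition mat2 (a b c d : int) : 'M[int]_2 :=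
  \matrix_(i < 2, j < 2)
    if i == 0 :> nat then (if j == 0 :> nat then a else c)
    else (if j == 0 :> nat then b else d).

Definition Lmat : 'M[int]_2 := mat2 1 1 0 1.
Definition Rmat : 'M[int]_2 := mat2 1 0 1 1.

Definition letter_mat (x : bool) : 'M[int]_2 := if x then Lmat else Rmat.

(* The word L^{q_k} R^{p_k} ... L^{q_1} R^{p_1}, with p = [:: p_1; ...; p_k],
   q = [:: q_1; ...; q_k]. *)
Definition LR_word (p q : seq nat) : seq bool :=
  flatten [seq nseq pq.2 true ++ nseq pq.1 false | pq <- rev (zip p q)].

Definition word_mat (w : seq bool) : 'M[int]_2 :=
  foldr (fun x M => letter_mat x *m M) 1%:M w.

(* The train track tau_[b/a, d/c] = f_M(tau_0) is represented by
   M = (a c; b d); tau_0 = tau_[0/1, 1/0] is the identity matrix.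
   tau_[b/a,d/c] := f_{(a c; b d)}(tau_0). *)
Definition tau (a b c d : int) : 'M[int]_2 := mat2 a b c d.
Definition tau0 : 'M[int]_2 := tau 1 0 0 1.

(* A measured train track: a track f_M(tau_0) together with the weights (x,y)
   on the images under f_M of the horizontal and the vertical small branches
   of tau_0 (the large branch has weight x + y). *)
Definition mtt (R : Type) := ('M[int]_2 * (R * R))%type.

Definition act (R : numFieldType) (M : 'M[int]_2) (v : R * R) : R * R :=
  ((M 0 0)%:~R * v.1 + (M 0 1)%:~R * v.2,
   (M 1 0)%:~R * v.1 + (M 1 1)%:~R * v.2).

(* The measured lamination carried by (f_M(tau_0), (x,y)): on tau_0 the
   weights (x,y) carry the linear measured lamination with vector (x,y)
   (slope y/x); f_M maps it to the one with vector M (x,y). *)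
Definition carried (R : numFieldType) (t : mtt R) : R * R := act t.1 t.2.

(* Stable measured lamination of the linear pseudo-Anosov f_A (paper's
   convention: f_A(L) = lambda L, leaves parallel to the expanding
   eigendirection): a nonzero eigenvector of A for an eigenvalue > 1. *)
Definition stable_lamination (R : numFieldType) (A : 'M[int]_2) (v : R * R) :=
  v != (0, 0) /\ exists lam : R, 1 < lam /\ act A v = (lam * v.1, lam * v.2).

Definition suited_to (R : numFieldType) (t : mtt R) (v : R * R) :=
  0 < t.2.1 /\ 0 < t.2.2 /\ carried t = v.

(* The action of f_A on measured train tracks: f_A(f_M(tau_0), mu) =
   (f_{AM}(tau_0), mu) (branches are carried along). *)
Definition fA (R : Type) (A : 'M[int]_2) (t : mtt R) : mtt R := (A *m t.1, t.2).

Definition scale_mtt (R : numFieldType) (c : R) (t : mtt R) : mtt R :=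
  (t.1, (c * t.2.1, c * t.2.2)).

(* Left splitting
   f_M(tau_0) -> f_{ML}(tau_0) when x < y (new weights (x, y - x));
   right splitting f_M(tau_0) -> f_{MR}(tau_0) when y < x (weights (x - y, y));
   when x = y the split would be central: no maximal splitting of this kind. *)
Definition max_split (R : realDomainType) (t : mtt R) : option (bool * mtt R) :=
  let: (M, (x, y)) := t in
  if x < y then Some (true, (M *m Lmat, (x, y - x)))
  else if y < x then Some (false, (M *m Rmat, (x - y, y)))
  else None.

Fixpoint mss (R : realDomainType) (t : mtt R) (n : nat) : option (mtt R) :=
  match n with
  | 0 => Some t
  | n'.+1 => obind (fun t' => omap snd (max_split t')) (mss t n')
  end.

Definition split_type (R : realDomainType) (t : mtt R) (i : nat) : option bool :=
  obind (fun t' => omap fst (max_split t')) (mss t i).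

Definition Agol_cycle (R : realFieldType) (A : 'M[int]_2) (lam : R)
    (t0 : mtt R) (n m : nat) :=
  (exists v, stable_lamination A v /\ suited_to t0 v) /\
  exists tn, mss t0 n = Some tn /\ mss t0 (n + m) = Some (fA A (scale_mtt lam^-1 tn)).

(** For a positive weight vector the maximal splitting is decided by which
    coordinate is larger, and [L (x, y) = (x, x + y)], [R (x, y) = (x + y, y)]
    are undone exactly by a left, resp. right, splitting.  Hence for a word [w]
    with matrix [W] and [v] positive, the maximal splitting sequence from
    [(M, W v)] spells out [w] and ends at [(M W, v)].  Since [A] is a
    nonnegative integer matrix of determinant one, its expanding eigenvector
    [(1, s)] has [s > 0]; taking [v = lam^-1 (1, s)], so that [A v = (1, s)],
    the sequence from [(tau_0, (1, s))] ends at [(A, lam^-1 (1, s))]. *)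
From mathcomp Require Import all_boot all_order all_algebra.
From mathcomp Require Import ring lra zify.
Set Implicit Arguments. Unset Strict Implicit. Unset Printing Implicit Defensive.
Import Order.TTheory GRing.Theory Num.Theory.
Local Open Scope ring_scope.

Lemma size_LR_word (p q : seq nat) : size p = size q ->
  size (LR_word p q) = (sumn p + sumn q)%N.
Proof.
elim: p q => [|a p IH] [|b q] //= [/IH H].
rewrite /LR_word /= rev_cons map_rcons flatten_rcons size_cat -/(LR_word p q) H.
rewrite size_cat !size_nseq /=; lia.
Qed.

Lemma mulmx2E (R : pzSemiRingType) (M N : 'M[R]_2) i j :
  (M *m N) i j = M i 0 * N 0 j + M i 1 * N 1 j.
Proof.
rewrite mxE !big_ord_recr big_ord0 /= add0r.
by congr (M _ _ * N _ _ + M _ _ * N _ _); apply: val_inj.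
Qed.

Lemma det_mx22 (R : comNzRingType) (M : 'M[R]_2) :
  \det M = M 0 0 * M 1 1 - M 0 1 * M 1 0.
Proof.
rewrite (expand_det_row _ 0) !big_ord_recr big_ord0 /cofactor !det_mx11 !mxE /=.
rewrite add0r !expr0 expr1 !mul1r mulN1r mulrN.
by congr (M _ _ * M _ _ - M _ _ * M _ _); apply: val_inj.
Qed.

Lemma tau0E : tau0 = 1%:M.
Proof.
by apply/matrixP => i j; rewrite !mxE; case: i => [[|[|//]] ?]; case: j => [[|[|//]] ?].
Qed.

Lemma tau_of_entries (A : 'M[int]_2) : tau (A 0 0) (A 1 0) (A 0 1) (A 1 1) = A.
Proof.
apply/matrixP => i j; rewrite !mxE.
by case: i => [[|[|//]] ?]; case: j => [[|[|//]] ?] /=; congr (A _ _); apply: val_inj.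
Qed.

Lemma word_mat_nneg w : word_mat w \is a mxOver (@Num.nneg int).
Proof.
elim: w => [|x w IH] /=; first exact: mxOver_scalar.
apply: mxOverM => //; apply/mxOverP => i j.
by case: x; rewrite /= /Lmat /Rmat /mat2 mxE; case: ifP; case: ifP.
Qed.

Lemma det_word_mat w : \det (word_mat w) = 1.
Proof.
elim: w => [|x w IH] /=; first exact: det1.
by rewrite det_mulmx IH mulr1 det_mx22; case: x; rewrite /= /Lmat /Rmat /mat2 !mxE.
Qed.

Section Action.
Context {R : numFieldType}.

Lemma act1mx (v : R * R) : act 1%:M v = v.
Proof. by case: v => x y; rewrite /act !mxE /= !mul1r !mul0r addr0 add0r. Qed.

Lemma act_mulmx (M N : 'M[int]_2) (v : R * R) : act (M *m N) v = act M (act N v).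
Proof.
by case: v => x y; rewrite /act !mulmx2E /=; congr (_, _); rewrite !intrD !intrM; ring.
Qed.

Lemma act_scale (M : 'M[int]_2) (c x y : R) :
  act M (c * x, c * y) = (c * (act M (x, y)).1, c * (act M (x, y)).2).
Proof. by rewrite /act /=; congr (_, _); ring. Qed.

Lemma act_letter (X : bool) (x y : R) :
  act (letter_mat X) (x, y) = if X then (x, x + y) else (x + y, y).
Proof. by case: X; rewrite /act !mxE /= ?mul1r ?mul0r ?addr0 ?add0r. Qed.

Lemma act_word_gt0 w (x y : R) : 0 < x -> 0 < y ->
  0 < (act (word_mat w) (x, y)).1 /\ 0 < (act (word_mat w) (x, y)).2.
Proof.
move=> x_gt0 y_gt0; elim: w => [|X w]; first by rewrite [word_mat _]/= act1mx.
rewrite [word_mat _]/= act_mulmx; case: (act _ (x, y)) => x' y' [x'_gt0 y'_gt0].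
by rewrite act_letter; case: X; split; rewrite ?addr_gt0.
Qed.

End Action.

Section SplittingSequence.
Variable R : realFieldType.
Implicit Types (t : mtt R) (M : 'M[int]_2).

Lemma mssSr t n : mss t n.+1 = obind (fun t' => mss t' n) (omap snd (max_split t)).
Proof.
elim: n t => [|n IH] t; first by rewrite /=; case: (max_split t).
by rewrite -[mss t n.+2]/(obind _ (mss t n.+1)) IH; case: (max_split t).
Qed.

Lemma split_type0 t : split_type t 0 = omap fst (max_split t).
Proof. by []. Qed.

Lemma split_typeSr t n :
  split_type t n.+1 = obind (fun t' => split_type t' n) (omap snd (max_split t)).
Proof. by rewrite /split_type mssSr; case: (max_split t). Qed.

Lemma max_split_letter M X (x y : R) : 0 < x -> 0 < y ->
  max_split (M, act (letter_mat X) (x, y)) = Some (X, (M *m letter_mat X, (x, y))).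
Proof.
move=> x_gt0 y_gt0; rewrite act_letter; case: X => /=.
  by rewrite ltrDl y_gt0 [x + y]addrC addrK.
by rewrite ltNge lerDr ltW //= ltrDr x_gt0 addrK.
Qed.

Lemma mss_word M w (x y : R) : 0 < x -> 0 < y ->
  mss (M, act (word_mat w) (x, y)) (size w) = Some (M *m word_mat w, (x, y)).
Proof.
move=> x_gt0 y_gt0; elim: w M => [|X w IH] M; first by rewrite /= act1mx mulmx1.
have [x'_gt0 y'_gt0] := act_word_gt0 w x_gt0 y_gt0.
rewrite [word_mat _]/= act_mulmx mssSr.
case: (act _ (x, y)) x'_gt0 y'_gt0 (IH (M *m letter_mat X)) => x' y' x'_gt0 y'_gt0 IHM.
by rewrite max_split_letter // mulmxA -IHM.
Qed.

Lemma split_type_word M w (x y : R) : 0 < x -> 0 < y ->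
  forall i, (i < size w)%N ->
  split_type (M, act (word_mat w) (x, y)) i = Some (nth false w i).
Proof.
move=> x_gt0 y_gt0; elim: w M => [//|X w IH] M i i_lt.
have [x'_gt0 y'_gt0] := act_word_gt0 w x_gt0 y_gt0.
rewrite [word_mat _]/= act_mulmx.
case: (act _ (x, y)) x'_gt0 y'_gt0 (IH (M *m letter_mat X)) => x' y' x'_gt0 y'_gt0 IHM.
case: i i_lt => [|i] i_lt; first by rewrite split_type0 max_split_letter.
by rewrite split_typeSr max_split_letter //; apply: IHM.
Qed.

End SplittingSequence.

Lemma eigen_slope_ge0 (R : realFieldType) (a b c d lam s : R) :
  0 <= a -> 0 <= b -> 0 <= c -> a * d - c * b = 1 -> 1 < lam ->
  a + c * s = lam -> b + d * s = lam * s -> 0 <= s.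
Proof.
move=> a_ge0 b_ge0 c_ge0 det1 lam_gt1 ea eb; rewrite leNgt; apply/negP => s_lt0.
have a_ge_lam : lam <= a by nra.
(* [lam (a s - b) = (a d - c b) s = s], so [s (lam a - 1) = lam b >= 0]. *)
have key : lam * (a * s - b) = s.
  transitivity (a * (lam * s) - b * lam); first ring.
  rewrite -eb -ea; transitivity ((a * d - c * b) * s); first ring.
  by rewrite det1 mul1r.
have lam_a_gt1 : 1 < lam * a by nra.
have : s * (lam * a - 1) = lam * b.
  by transitivity (lam * a * s - lam * (a * s - b)); [rewrite key | ]; ring.
nra.
Qed.

Lemma eigen_slope_gt0 (R : realFieldType) (A : 'M[int]_2) (lam s : R) :
  A \is a mxOver (@Num.nneg int) -> \det A = 1 -> 1 < lam ->
  act A (1, s) = (lam * 1, lam * s) -> 0 < s.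
Proof.
move=> /mxOverP A_nneg; rewrite det_mx22 => detA lam_gt1 []; rewrite !mulr1 => ea eb.
have entry_ge0 i j : 0 <= (A i j)%:~R :> R by rewrite ler0z -nnegrE.
have detR : (A 0 0)%:~R * (A 1 1)%:~R - (A 0 1)%:~R * (A 1 0)%:~R = 1 :> R.
  by rewrite -!intrM -intrB detA.
have s_ge0 :=
  eigen_slope_ge0 (entry_ge0 0 0) (entry_ge0 1 0) (entry_ge0 0 1) detR lam_gt1 ea eb.
rewrite lt_def s_ge0 andbT; apply/negP => /eqP s0.
move: eb ea; rewrite s0 !mulr0 !addr0 => /eqP; rewrite intr_eq0 => /eqP b0.
have a1 : A 0 0 = 1.
  have : A 0 0 \is a GRing.unit.
    by apply/unitrPr; exists (A 1 1); rewrite -detA b0 mulr0 subr0.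
  rewrite qualifE /= => /orP [/eqP // | /eqP a_m1].
  by have := A_nneg 0 0; rewrite a_m1.
by rewrite a1 => lam1; move: lam_gt1; rewrite -lam1 ltxx.
Qed.

Theorem theorem3p6 (R : realFieldType) (k : nat) (p q : seq nat)
    (A : 'M[int]_2) (lam s : R) :
  (0 < k)%N -> size p = k -> size q = k ->
  all (fun n => 0 < n)%N p -> all (fun n => 0 < n)%N q ->
  A = word_mat (LR_word p q) ->
  1 < lam -> act A (1, s) = (lam * 1, lam * s) ->
  let l := (sumn p + sumn q)%N in
  let t0 : mtt R := (tau0, (1, s)) in
  (* (1) *)
  (stable_lamination A (carried t0) /\ suited_to t0 (carried t0)) /\
  (* (2) *)
  (forall i, (i < l)%N -> split_type t0 i = Some (nth false (LR_word p q) i)) /\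
  mss t0 l = Some (fA A (scale_mtt lam^-1 t0)) /\
  Agol_cycle A lam t0 0 l /\
  omap fst (mss t0 l) = Some (tau (A 0 0) (A 1 0) (A 0 1) (A 1 1)).
Proof.
move=> _ sp sq _ _ defA lam_gt1 eigA l t0.
have s_gt0 : 0 < s.
  by apply: (eigen_slope_gt0 _ _ lam_gt1 eigA); rewrite defA ?word_mat_nneg ?det_word_mat.
have lam_gt0 : 0 < lam := lt_trans ltr01 lam_gt1.
have x_gt0 : 0 < lam^-1 * 1 by rewrite mulr1 invr_gt0.
have y_gt0 : 0 < lam^-1 * s by rewrite mulr_gt0 ?invr_gt0.
have eig_scaled : act A (lam^-1 * 1, lam^-1 * s) = (1, s).
  by rewrite act_scale eigA /= !mulrA mulVf ?gt_eqF // !mul1r.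
have carried_t0 : carried t0 = (1, s) by rewrite /carried /= tau0E act1mx.
have size_w : size (LR_word p q) = l by rewrite size_LR_word ?sp ?sq.
have t0E : t0 = (1%:M, act (word_mat (LR_word p q)) (lam^-1 * 1, lam^-1 * s)).
  by rewrite -defA eig_scaled /t0 tau0E.
have mss_l : mss t0 l = Some (fA A (scale_mtt lam^-1 t0)).
  by rewrite {1}t0E -size_w mss_word // mul1mx /fA /t0 tau0E mulmx1 defA.
have stable : stable_lamination A (carried t0).
  by rewrite carried_t0; split; [rewrite xpair_eqE oner_eq0 | exists lam].
have suited : suited_to t0 (carried t0) by rewrite /suited_to /= ltr01 s_gt0.
split=> //; split.
  by rewrite t0E -size_w; apply: split_type_word.
split=> //; split; first by split; [exists (carried t0) | exists t0].
by rewrite mss_l /= tau0E mulmx1 tau_of_entries.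
Qed.
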